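(* Let $k$ be a field, $H=\langle a_1,\dots,a_\ell\rangle$ a numerical semigroup with $\gcd(a_1,\dots,a_\ell)=1$, $R=k[[H]]=k[[t^{a_1},\dots,t^{a_\ell}]]\subseteq k[[t]]$, $f=\mathrm f(H)$ the Frobenius number and $\mathrm{PF}(H)$ the set of pseudo-Frobenius numbers, and $K=\sum_{c\in\mathrm{PF}(H)}Rt^{f-c}$. Suppose that $R$ is a $2$-AGL ring. Then $$K/R=\bigoplus_{c\in\mathrm{PF}(H)\setminus\{f\}}R\cdot\overline{t^{f-c}}$$ (an internal direct sum), where $\overline{(\ast)}$ denotes the image in $K/R$.
   Context: $\mathrm f(H)=\max(\mathbb Z\setminus H)$; $\mathrm{PF}(H)=\{n\in\mathbb Z\setminus H: n+a_i\in H \text{ for all } i\}$. $K$ is a canonical fractional ideal of $R$ (i.e. $R\subseteq K\subseteq\overline R=k[[t]]$ and $K\cong\mathrm K_R$). $R$ is $2$-AGL if it has a canonical ideal $I$ (proper ideal $\cong\mathrm K_R$) containing a parameter ideal as a reduction with $\mathrm e_1(I)=\mathrm e_0(I)-\ell_R(R/I)+2$; equivalently $\ell_R(R[K]/K)=2$. *)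

From mathcomp Require Import all_boot all_order all_algebra.
Set Implicit Arguments. Unset Strict Implicit. Unset Printing Implicit Defensive.
Import Order.TTheory GRing.Theory Num.Theory.
Local Open Scope ring_scope.

(** Formal power series k[[t]] : coefficient functions nat -> k. *)
Definition ps (k : fieldType) := nat -> k.

Section PS.
Variable k : fieldType.
Definition ps0 : ps k := fun _ => 0.
Definition ps1 : ps k := fun n => (n == 0%N)%:R.
Definition psX (m : nat) : ps k := fun n => (n == m)%:R.
Definition psadd (x y : ps k) : ps k := fun n => x n + y n.
Definition psopp (x : ps k) : ps k := fun n => - x n.
Definition psmul (x y : ps k) : ps k :=
  fun n => \sum_(i < n.+1) x i * y (n - i)%N.

Definition Rsubmod (R L : ps k -> Prop) : Prop :=
  L ps0 /\ (forall x y, L x -> L y -> L (psadd x y)) /\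
  (forall r x, R r -> L x -> L (psmul r x)).

Definition subring (S : ps k -> Prop) : Prop :=
  S ps1 /\ (forall x y, S x -> S y -> S (psadd x y)) /\
  (forall x, S x -> S (psopp x)) /\ (forall x y, S x -> S y -> S (psmul x y)).

Definition ring_gen (K : ps k -> Prop) : ps k -> Prop :=
  fun x => forall S, subring S -> (forall y, K y -> S y) -> S x.

Definition Rchain (R N M : ps k -> Prop) (n : nat) (L : nat -> ps k -> Prop) :=
  L 0%N = N /\ L n = M /\ (forall i, (i <= n)%N -> Rsubmod R (L i)) /\
  (forall i, (i < n)%N -> (forall x, L i x -> L i.+1 x) /\ L i <> L i.+1).

Definition length_eq (R N M : ps k -> Prop) (n : nat) : Prop :=
  (exists L, Rchain R N M n L) /\ (forall m L, Rchain R N M m L -> (m <= n)%N).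

(** M/N is the internal direct sum of the cyclic submodules R * (image of g_i). *)
Definition quot_direct_sum (R N M : ps k -> Prop) (g : seq (ps k)) : Prop :=
  (forall x, M x <-> exists y (r : nat -> ps k), N y /\ (forall i, R (r i)) /\
      x = psadd y (\big[psadd/ps0]_(i < size g) psmul (r i) (nth ps0 g i))) /\
  (forall r : nat -> ps k, (forall i, R (r i)) ->
      N (\big[psadd/ps0]_(i < size g) psmul (r i) (nth ps0 g i)) ->
      forall i, (i < size g)%N -> N (psmul (r i) (nth ps0 g i))).
End PS.

Definition inH (a : seq nat) (n : nat) : Prop :=
  exists m : 'I_(size a) -> nat, n = (\sum_(i < size a) m i * nth 0 a i)%N.
Definition inHz (a : seq nat) (z : int) : Prop :=
  exists n : nat, z = n%:Z /\ inH a n.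

Definition frobenius (a : seq nat) (f : int) : Prop :=
  ~ inHz a f /\ forall n : int, f < n -> inHz a n.

Definition pseudo_frobenius (a : seq nat) (c : int) : Prop :=
  ~ inHz a c /\ forall i, (i < size a)%N -> inHz a (c + (nth 0 a i)%:Z).

Definition semigroup_ring (k : fieldType) (a : seq nat) : ps k -> Prop :=
  fun x => forall n, x n != 0 -> inH a n.

Arguments semigroup_ring k a _ : clear implicits.

Definition canonK (k : fieldType) (a : seq nat) (f : int) (pf : seq int) : ps k -> Prop :=
  fun x => exists r : int -> ps k, (forall c, semigroup_ring k a (r c)) /\
    x = \big[@psadd k/@ps0 k]_(c <- pf) psmul (r c) (@psX k `|f - c|%N).

Arguments canonK k a f pf _ : clear implicits.

Definition two_AGL (k : fieldType) (R K : ps k -> Prop) : Prop :=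
  length_eq R K (ring_gen K) 2.

From HB Require Import structures.
From mathcomp Require Import all_boot all_order all_algebra.
From mathcomp Require Import zify.
From Stdlib Require Import FunctionalExtensionality Classical.
Set Implicit Arguments.
Unset Strict Implicit.
Unset Printing Implicit Defensive.

Import Order.TTheory GRing.Theory Num.Theory.
Local Open Scope ring_scope.

(* K/R is spanned by the images of the t^(f-c), c in PF(H) \ {f}; the point is
   independence.  If a relation sum_c r_c t^(f-c) in R had a term with a gap n in
   its support, the t^n-coefficients of two terms with c <> c' would have to
   cancel, so n lies in both (f - c) + H and (f - c') + H.  With z = f - n, both
   f - z and f - n are gaps, so t^z and t^n lie in K and R[K] contains t^f,
   t^(z+f-c) and t^(z+f-c').  These three exponents are distinct, lie in f - H
   (where every element of K has zero coefficient) and t^f has the largest one: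
   f - c = n would give c' = c + h with 0 <> h in H, forcing c' into H.
   Adjoining them to K one at a time, largest first, gives a strict chain of
   length 3 from K to R[K], contradicting l_R(R[K]/K) = 2. *)

Lemma take_polyMl (R : comNzRingType) N (p q : {poly R}) :
  take_poly N (take_poly N p * q) = take_poly N (p * q).
Proof.
rewrite -{2}(poly_take_drop N p) mulrDl take_polyD mulrAC take_polyMXn_0.
by rewrite addr0.
Qed.

Lemma sum_neq0_summand (V : nmodType) (I : finType) (P : pred I) (F : I -> V) :
  \sum_(i | P i) F i != 0 -> exists2 i, P i & F i != 0.
Proof.
have [i /andP [Pi Fi_neq0]|F0] := pickP (fun i => P i && (F i != 0)); first by exists i.
rewrite big1 ?eqxx // => i Pi; by move: (F0 i); rewrite Pi => /negbFE/eqP.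
Qed.

Section PowerSeries.
Variable k : fieldType.
Implicit Types (x y z : ps k) (e n : nat).
Local Notation X := (psX k).

Lemma psaddA : associative (@psadd k).
Proof. by move=> x y z; apply: functional_extensionality => n; rewrite /psadd addrA. Qed.

Lemma psaddC : commutative (@psadd k).
Proof. by move=> x y; apply: functional_extensionality => n; rewrite /psadd addrC. Qed.

Lemma psadd0l : left_id (ps0 k) (@psadd k).
Proof. by move=> x; apply: functional_extensionality => n; rewrite /psadd add0r. Qed.

HB.instance Definition _ :=
  Monoid.isComLaw.Build (ps k) (ps0 k) (@psadd k) psaddA psaddC psadd0l.

Lemma coef_pssum (I : Type) (s : seq I) (P : pred I) (F : I -> ps k) n :
  (\big[@psadd k/ps0 k]_(i <- s | P i) F i) n = \sum_(i <- s | P i) F i n.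
Proof. exact: (big_morph (fun x : ps k => x n) (id1 := 0) (op1 := +%R)). Qed.

Definition pstrunc N x : {poly k} := \poly_(i < N) x i.

Lemma pstrunc_mul N x y :
  pstrunc N (psmul x y) = take_poly N (pstrunc N x * pstrunc N y).
Proof.
apply/polyP => n; rewrite coef_take_poly coef_poly; case: ltnP => // ltnN.
rewrite coefM; apply: eq_bigr => i _; rewrite !coef_poly.
by rewrite !ifT //; apply: leq_ltn_trans ltnN; rewrite ?leq_subr // -ltnS.
Qed.

Lemma psmulC : commutative (@psmul k).
Proof.
move=> x y; apply: functional_extensionality => n.
have := congr1 (coefp n) (pstrunc_mul n.+1 x y).
by rewrite mulrC -pstrunc_mul /= !coef_poly ltnSn.
Qed.

Lemma psmulA : associative (@psmul k).
Proof.
move=> x y z; apply: functional_extensionality => n.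
have trunc_assoc :
    pstrunc n.+1 (psmul (psmul x y) z) = pstrunc n.+1 (psmul x (psmul y z)).
  rewrite !pstrunc_mul take_polyMl [in RHS]mulrC take_polyMl.
  by rewrite [in RHS]mulrC mulrA.
by have := congr1 (coefp n) trunc_assoc; rewrite /= !coef_poly ltnSn.
Qed.

Lemma psmulDr x y z : psmul x (psadd y z) = psadd (psmul x y) (psmul x z).
Proof.
apply: functional_extensionality => n; rewrite /psmul /psadd -big_split /=.
by apply: eq_bigr => i _; rewrite mulrDr.
Qed.

Lemma psmulDl x y z : psmul (psadd x y) z = psadd (psmul x z) (psmul y z).
Proof. by rewrite psmulC psmulDr !(psmulC z). Qed.

Lemma psmul0l x : psmul (ps0 k) x = ps0 k.
Proof.
by apply: functional_extensionality => n; rewrite /psmul big1 // => i _; rewrite mul0r.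
Qed.

Lemma coef_psmulX x e n : psmul x (X e) n = if (e <= n)%N then x (n - e)%N else 0.
Proof.
rewrite /psmul; case: leqP => [len|ltn]; last first.
  by rewrite big1 // => i _; rewrite /psX; case: eqP => [|_]; [lia | rewrite mulr0].
rewrite (bigD1 (Ordinal (leq_ltn_trans (leq_subr e n) (ltnSn n)))) //= subKn //.
rewrite /psX eqxx mulr1 big1 ?addr0 // => i /eqP neq.
case: eqP => [?|_]; last by rewrite mulr0.
by case: neq; apply: val_inj => /=; have := ltn_ord i; lia.
Qed.

Lemma coef_psmulX_neq0 x e n :
  psmul x (X e) n != 0 -> (e <= n)%N /\ x (n - e)%N != 0.
Proof. by rewrite coef_psmulX; case: leqP; rewrite ?eqxx. Qed.

Lemma psmul1r x : psmul x (ps1 k) = x.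
Proof. by apply: functional_extensionality => n; rewrite (coef_psmulX x 0) subn0. Qed.

Lemma psXD e1 e2 : psmul (X e1) (X e2) = X (e1 + e2).
Proof.
apply: functional_extensionality => n; rewrite coef_psmulX /psX.
case: leqP => h; last by have /negbTE-> : n != (e1 + e2)%N by lia.
by have -> : (n - e2 == e1)%N = (n == e1 + e2)%N by apply/eqP/eqP; lia.
Qed.

Lemma psmul_sumr (I : Type) (s : seq I) (P : pred I) (F : I -> ps k) x :
  psmul x (\big[@psadd k/ps0 k]_(i <- s | P i) F i) =
  \big[@psadd k/ps0 k]_(i <- s | P i) psmul x (F i).
Proof.
apply: big_endo; first exact: psmulDr.
by rewrite psmulC psmul0l.
Qed.

End PowerSeries.

Section NumericalSemigroup.
Variable a : seq nat.
Implicit Types (h m n : nat) (c z : int).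

Lemma inH0 : inH a 0.
Proof. by exists (fun _ => 0%N); rewrite big1. Qed.

Lemma inHD m n : inH a m -> inH a n -> inH a (m + n).
Proof.
move=> [u ->] [v ->]; exists (fun i => u i + v i)%N.
by rewrite -big_split; apply: eq_bigr => i _; rewrite mulnDl.
Qed.

Lemma inH_nth i : (i < size a)%N -> inH a (nth 0 a i).
Proof.
move=> lt_i; exists (fun j : 'I_(size a) => nat_of_bool (j == Ordinal lt_i)).
rewrite (bigD1 (Ordinal lt_i)) //= eqxx mul1n big1 ?addn0 // => j /negbTE -> //.
Qed.

Lemma inH_subn_nth h : inH a h -> h <> 0%N ->
  exists2 i, (i < size a)%N & (nth 0 a i <= h)%N /\ inH a (h - nth 0 a i).
Proof.
move=> [u ->] h_neq0; have [j u_j|u0] := pickP (fun j => u j != 0%N); last first.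
  by case: h_neq0; rewrite big1 // => i _; move/eqP: (u0 i) => ->.
exists j => //; rewrite (bigD1 j) //=; split.
  by apply: leq_trans (leq_addr _ _); rewrite leq_pmull // lt0n.
exists (fun i => if i == j then (u i).-1 else u i).
rewrite [in RHS](bigD1 j) //= eqxx.
rewrite [in RHS](eq_bigr (fun i => u i * nth 0 a i)%N) => [|i /negbTE -> //].
by move: u_j; case: (u j) => //= p _; rewrite mulSn -addnA addKn.
Qed.

Lemma inHz_nat n : inHz a n%:Z <-> inH a n.
Proof. by split => [[m [/eqP]]|h]; [rewrite eqz_nat => /eqP -> | exists n]. Qed.

Lemma inHz0 : inHz a 0.
Proof. exact/(inHz_nat 0)/inH0. Qed.

Lemma inHzD z1 z2 : inHz a z1 -> inHz a z2 -> inHz a (z1 + z2).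
Proof. by move=> [m [-> hm]] [n [-> hn]]; exists (m + n)%N; split => //; apply: inHD. Qed.

Lemma pseudo_frobeniusD c h :
  pseudo_frobenius a c -> inH a h -> h <> 0%N -> inHz a (c + h%:Z).
Proof.
move=> [_ c_nth] /inH_subn_nth h_split /h_split [i lt_i [le_ih H_rest]].
have -> : c + h%:Z = (c + (nth 0%N a i)%:Z) + (h - nth 0 a i)%N%:Z by lia.
by apply: inHzD; [apply: c_nth | apply/inHz_nat].
Qed.

Hypothesis a_gt0 : all (fun x => 0 < x)%N a.
Variable f : int.
Hypothesis f_frob : frobenius a f.

Lemma gap_le_frobenius z : ~ inHz a z -> z <= f.
Proof. by move=> z_gap; case: leP => // /(f_frob.2) /z_gap. Qed.

Lemma frobenius_pseudo_frobenius : pseudo_frobenius a f.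
Proof.
split; first exact: f_frob.1.
move=> i lt_i; apply: f_frob.2; rewrite ltrDl ltz_nat; exact: (all_nthP 0%N a_gt0).
Qed.

Lemma gap_below_pseudo_frobenius z :
  ~ inHz a z -> exists2 c, pseudo_frobenius a c & inHz a (c - z).
Proof.
move=> z_gap; have [N] := ubnP `|f - z|; elim: N z z_gap => // N IH z z_gap lt_N.
have [z_pf | ] := classic (forall i, (i < size a)%N -> inHz a (z + (nth 0%N a i)%:Z)).
  by exists z; [split | rewrite subrr; apply: inHz0].
move=> /not_all_ex_not [i not_zi]; have [lt_i zi_gap] := imply_to_and _ _ not_zi.
have := all_nthP 0%N a_gt0 i lt_i; have := gap_le_frobenius zi_gap => /= le_f a_i_gt0.
have [|c c_pf H_c] := IH _ zi_gap; first lia.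
exists c => //; have -> : c - z = (c - (z + (nth 0%N a i)%:Z)) + (nth 0%N a i)%:Z by lia.
by apply: inHzD => //; apply/inHz_nat/inH_nth.
Qed.

End NumericalSemigroup.

Section SemigroupRing.
Variables (k : fieldType) (a : seq nat).
Local Notation R := (semigroup_ring k a).

Lemma semigroup_ring_subring : subring R.
Proof.
split; last split; last split.
- move=> n; rewrite /ps1.
  by have [-> _|_] := eqVneq n 0%N; [apply: inH0 | rewrite eqxx].
- move=> x y Rx Ry n; rewrite /psadd.
  by have [x0|/Rx //] := eqVneq (x n) 0; rewrite x0 add0r => /Ry.
- by move=> x Rx n; rewrite /psopp oppr_eq0 => /Rx.
- move=> x y Rx Ry n /sum_neq0_summand [i _ xy_neq0].
  have H_i : inH a i by apply: Rx; apply: contraNneq xy_neq0 => ->; rewrite mul0r.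
  have H_ni : inH a (n - i) by apply: Ry; apply: contraNneq xy_neq0 => ->; rewrite mulr0.
  by have := inHD H_i H_ni; rewrite subnKC // -ltnS.
Qed.

Lemma semigroup_ring_X d : inH a d -> R (psX k d).
Proof.
by move=> H_d n; rewrite /psX; have [-> //|_] := eqVneq n d; rewrite eqxx.
Qed.

End SemigroupRing.

Section Submodules.
Variable k : fieldType.
Implicit Types (S K N M : ps k -> Prop) (x y g : ps k) (e n : nat).
Local Notation X := (psX k).

Lemma subring0 S : subring S -> S (ps0 k).
Proof.
move=> [S1 [SD [SN _]]]; have := SD _ _ S1 (SN _ S1).
by congr S; apply: functional_extensionality => n; rewrite /psadd /psopp subrr.
Qed.

Lemma sub_ring_gen K x : K x -> ring_gen K x.
Proof. by move=> Kx S _; apply. Qed.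

Lemma ring_gen_subring K : subring (ring_gen K).
Proof.
split; last split; last split.
- by move=> S [S1 _].
- move=> x y gx gy S S_sub KS; have [_ [SD _]] := S_sub.
  by apply: SD; [apply: gx | apply: gy].
- by move=> x gx S S_sub KS; apply: S_sub.2.2.1; apply: gx.
- move=> x y gx gy S S_sub KS; have [_ [_ [_ SM]]] := S_sub.
  by apply: SM; [apply: gx | apply: gy].
Qed.

Lemma ring_gen_submod S K :
  (forall x, S x -> K x) -> Rsubmod S (ring_gen K).
Proof.
move=> SK; have gen_sub := ring_gen_subring K.
have [_ [gD [_ gM]]] := gen_sub; split; [exact: subring0 | split => // r x /SK Kr gx].
by apply: gM => //; apply: sub_ring_gen.
Qed.

Variable R : ps k -> Prop.
Hypothesis R_subring : subring R.

Definition adjoin N g : ps k -> Prop :=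
  fun x => exists u s, [/\ N u, R s & x = psadd u (psmul s g)].

Lemma adjoin_submod N g : Rsubmod R N -> Rsubmod R (adjoin N g).
Proof.
have [_ [RD [_ RM]]] := R_subring; move=> [N0 [ND NM]]; split; last split.
- exists (ps0 k), (ps0 k); split => //; first exact: subring0.
  by rewrite psmul0l psadd0l.
- move=> _ _ [u [s [Nu Rs ->]]] [u' [s' [Nu' Rs' ->]]].
  exists (psadd u u'), (psadd s s'); split; [exact: ND | exact: RD |].
  by rewrite psmulDl; exact: SemiGroup.mulmACA.
- move=> r _ Rr [u [s [Nu Rs ->]]]; exists (psmul r u), (psmul r s).
  by split; [exact: NM | exact: RM | rewrite psmulDr psmulA].
Qed.

Lemma adjoin_subl N g x : N x -> adjoin N g x.
Proof.
move=> Nx; exists x, (ps0 k); split => //; first exact: subring0.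
by rewrite psmul0l psaddC psadd0l.
Qed.

Lemma adjoin_gen N g : Rsubmod R N -> adjoin N g g.
Proof.
move=> [N0 _]; exists (ps0 k), (ps1 k); split => //; first exact: R_subring.1.
by rewrite psadd0l psmulC psmul1r.
Qed.

Lemma adjoin_min N M g :
  Rsubmod R M -> (forall x, N x -> M x) -> M g -> forall x, adjoin N g x -> M x.
Proof.
move=> [_ [MD MM]] NM Mg _ [u [s [Nu Rs ->]]].
by apply: MD; [apply: NM | apply: MM].
Qed.

Lemma adjoinX_vanish N e n :
  (forall x, N x -> x n = 0) -> (n < e)%N -> forall x, adjoin N (X e) x -> x n = 0.
Proof.
move=> N_n lt_ne _ [u [s [Nu Rs ->]]].
by rewrite /psadd coef_psmulX leqNgt lt_ne N_n // addr0.
Qed.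

Definition separating_monomial N M e := M (X e) /\ forall x, N x -> x e = 0.

Lemma Rchain3_monomials N M e0 e1 e2 :
  Rsubmod R N -> Rsubmod R M -> (forall x, N x -> M x) ->
  e0 != e1 -> (e0 < e2)%N -> (e1 < e2)%N ->
  separating_monomial N M e0 -> separating_monomial N M e1 ->
  separating_monomial N M e2 ->
  exists L, Rchain R N M 3 L.
Proof.
move=> N_mod M_mod NM ne01 lt02 lt12 sep0 sep1 [M_X2 N_2].
wlog lt01 : e0 e1 ne01 lt02 lt12 sep0 sep1 / (e0 < e1)%N.
  move=> gen; case: (ltngtP e0 e1) => [lt01|lt10|eq01]; first exact: (gen e0 e1).
    by apply: (gen e1 e0) => //; rewrite eq_sym.
  by rewrite eq01 eqxx in ne01.
move: sep0 sep1 => [M_X0 N_0] [M_X1 N_1].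
pose L1 := adjoin N (X e2); pose L2 := adjoin L1 (X e1).
have L1_mod : Rsubmod R L1 := adjoin_submod (X e2) N_mod.
have L2_mod : Rsubmod R L2 := adjoin_submod (X e1) L1_mod.
have L1_0 : forall x, L1 x -> x e0 = 0 := adjoinX_vanish N_0 lt02.
have L1_1 : forall x, L1 x -> x e1 = 0 := adjoinX_vanish N_1 lt12.
have L2_0 : forall x, L2 x -> x e0 = 0 := adjoinX_vanish L1_0 lt01.
have neq_vanish A B e : (forall x, A x -> x e = 0) -> B (X e) -> A <> B.
  by move=> A_e + AB; rewrite -AB => /A_e; rewrite /psX eqxx => /eqP; rewrite oner_eq0.
exists (nth M [:: N; L1; L2]); do 2 split => //; split.
  by case=> [|[|[|[|i]]]].
case=> [|[|[|i]]] // _; split.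
- exact: adjoin_subl.
- exact: neq_vanish N_2 (adjoin_gen _ N_mod).
- exact: adjoin_subl.
- exact: neq_vanish L1_1 (adjoin_gen _ L1_mod).
- exact: adjoin_min M_mod (adjoin_min M_mod NM M_X2) M_X1.
- exact: neq_vanish L2_0 M_X0.
Qed.

End Submodules.

Section CanonicalModule.
Variables (k : fieldType) (a : seq nat) (f : int) (pf : seq int).
Hypothesis a_gt0 : all (fun x => 0 < x)%N a.
Hypothesis f_frob : frobenius a f.
Hypothesis pf_uniq : uniq pf.
Hypothesis pfP : forall c, c \in pf <-> pseudo_frobenius a c.

Local Notation R := (semigroup_ring k a).
Local Notation K := (canonK k a f pf).
Local Notation X := (psX k).
Local Notation pf' := [seq c <- pf | c != f].
Implicit Types (c : int) (x s : ps k) (y n : nat).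

Lemma frobenius_in_pf : f \in pf.
Proof. exact/pfP/frobenius_pseudo_frobenius. Qed.

Lemma pf_absE c : c \in pf -> (`|f - c|%N)%:Z = f - c.
Proof. by move=> /pfP [/(gap_le_frobenius f_frob) le_cf _]; lia. Qed.

Lemma canonK_mulX c s : c \in pf -> R s -> K (psmul s (X `|f - c|%N)).
Proof.
move=> c_pf Rs; exists (fun d => if d == c then s else ps0 k); split.
  by move=> d; case: eqP => // _; exact: subring0 (semigroup_ring_subring k a).
rewrite (bigD1_seq c) // eqxx big1 ?Monoid.mulm1 // => d /negbTE ->.
exact: psmul0l.
Qed.

Lemma semigroup_ring_canonK x : R x -> K x.
Proof. by move=> /(canonK_mulX frobenius_in_pf); rewrite subrr psmul1r. Qed.

Lemma canonK_submod : Rsubmod R K.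
Proof.
have [_ [RD [_ RM]]] := semigroup_ring_subring k a.
split; first exact: semigroup_ring_canonK (subring0 (semigroup_ring_subring k a)).
split=> [_ _ [r [Rr ->]] [r' [Rr' ->]] | s _ Rs [r [Rr ->]]].
  exists (fun c => psadd (r c) (r' c)); split=> [c|]; first exact: RD.
  by rewrite -big_split; apply: eq_bigr => c _; rewrite psmulDl.
exists (fun c => psmul s (r c)); split=> [c|]; first exact: RM.
by rewrite psmul_sumr; apply: eq_bigr => c _; rewrite psmulA.
Qed.

Lemma canonK_vanish x y : K x -> inHz a (f - y%:Z) -> x y = 0.
Proof.
move=> [r [Rr ->]] H_fy; rewrite coef_pssum big1_seq // => c /andP [_ c_pf].
have [/eqP //|/coef_psmulX_neq0 [le_cy /Rr H_yc]] :=
  eqVneq (psmul (r c) (X `|f - c|%N) y) 0.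
have [c_gap _] := (pfP c).1 c_pf; case: c_gap.
have -> : c = (y - `|f - c|)%N%:Z + (f - y%:Z) by have := pf_absE c_pf; lia.
exact/inHzD/H_fy/inHz_nat.
Qed.

Lemma canonK_X y : ~ inHz a (f - y%:Z) -> K (X y).
Proof.
move=> /(gap_below_pseudo_frobenius a_gt0 f_frob) [c /pfP c_pf [d [d_eq H_d]]].
have -> : y = (d + `|f - c|)%N by have := pf_absE c_pf; lia.
by rewrite -psXD; apply: canonK_mulX => //; apply: semigroup_ring_X.
Qed.

Lemma canonK_X_pf c : c \in pf -> K (X `|f - c|%N).
Proof.
by move=> c_pf; apply: canonK_X; rewrite pf_absE // subKr; case/pfP: c_pf.
Qed.

Lemma canonK_separating y :
  inHz a (f - y%:Z) -> ring_gen K (X y) -> separating_monomial K (ring_gen K) y.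
Proof. by move=> H_fy gen_y; split=> // x /canonK_vanish; apply. Qed.

Lemma pf_absB_neq n c c' : c \in pf -> c' \in pf -> c != c' ->
  (`|f - c'| <= n)%N -> inH a (n - `|f - c'|) -> `|f - c|%N != n.
Proof.
move=> c_pf c'_pf ne_cc' le_c' H_c'; apply/eqP => e_n.
have Ec := pf_absE c_pf; have Ec' := pf_absE c'_pf.
have [c'_gap _] := (pfP c').1 c'_pf; apply: c'_gap.
have -> : c' = c + (n - `|f - c'|)%N%:Z by lia.
apply: pseudo_frobeniusD H_c' _; first exact/pfP.
by move=> h0; move/eqP: ne_cc'; apply; lia.
Qed.

Lemma canonK_Rchain3 n ci cj :
  ~ inH a n -> ci \in pf -> cj \in pf -> ci != cj ->
  (`|f - ci| <= n)%N -> inH a (n - `|f - ci|) ->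
  (`|f - cj| <= n)%N -> inH a (n - `|f - cj|) ->
  exists L, Rchain R K (ring_gen K) 3 L.
Proof.
move=> n_gap ci_pf cj_pf ne_ij le_i H_i le_j H_j.
have n_le_f : n%:Z <= f by apply: (gap_le_frobenius f_frob) => /inHz_nat /n_gap.
have Ei := pf_absE ci_pf; have Ej := pf_absE cj_pf.
set z := (`|f|%N - n)%N.
have z_gap : ~ inHz a z%:Z.
  move=> /inHz_nat H_z; have [ci_gap _] := (pfP ci).1 ci_pf; apply: ci_gap.
  have -> : ci = (z + (n - `|f - ci|))%N%:Z by lia.
  exact/inHz_nat/inHD.
have K_z : K (X z).
  by apply: canonK_X; rewrite (_ : f - z%:Z = n%:Z); [move/inHz_nat | lia].
have K_n : K (X n) by apply: canonK_X; rewrite (_ : f - n%:Z = z%:Z) //; lia.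
have gen_mulX y y' : K (X y) -> K (X y') -> ring_gen K (X (y + y')).
  have [_ [_ [_ gen_mul]]] := ring_gen_subring K.
  by move=> K_y K_y'; rewrite -psXD; apply: gen_mul; apply: sub_ring_gen.
have sep_pf c : c \in pf -> (`|f - c| <= n)%N -> inH a (n - `|f - c|) ->
    separating_monomial K (ring_gen K) (z + `|f - c|).
  move=> c_pf le_c H_c; have := pf_absE c_pf => Ec.
  apply: canonK_separating; last exact: gen_mulX K_z (canonK_X_pf c_pf).
  by rewrite (_ : f - _ = (n - `|f - c|)%N%:Z); [apply/inHz_nat | lia].
have sep_f : separating_monomial K (ring_gen K) `|f|%N.
  apply: canonK_separating; first by rewrite (_ : f - _ = 0); [apply: inHz0 | lia].
  by rewrite (_ : `|f|%N = (z + n)%N); [apply: gen_mulX | lia].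
apply: (Rchain3_monomials (semigroup_ring_subring k a) canonK_submod
  (ring_gen_submod semigroup_ring_canonK) (@sub_ring_gen _ K) _ _ _
  (sep_pf _ ci_pf le_i H_i) (sep_pf _ cj_pf le_j H_j) sep_f).
- by rewrite eqn_add2l; apply: contra ne_ij => /eqP E; apply/eqP; lia.
- by have := pf_absB_neq ci_pf cj_pf ne_ij le_j H_j; lia.
- by rewrite eq_sym in ne_ij; have := pf_absB_neq cj_pf ci_pf ne_ij le_i H_i; lia.
Qed.

Local Notation gens := [seq X `|f - c|%N | c <- pf'].

Lemma big_pf_split (F : int -> ps k) :
  \big[@psadd k/ps0 k]_(c <- pf) F c =
  psadd (F f) (\big[@psadd k/ps0 k]_(i < size pf') F (nth 0 pf' i)).
Proof.
by rewrite (bigD1_seq f) ?frobenius_in_pf // -big_filter (big_nth 0) big_mkord.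
Qed.

Lemma nth_gens i :
  (i < size pf')%N -> nth (ps0 k) gens i = X `|f - nth (0 : int) pf' i|%N.
Proof. exact: nth_map. Qed.

Lemma canonK_span x :
  K x <-> exists (y : ps k) (r : nat -> ps k), R y /\ (forall i, R (r i)) /\
    x = psadd y (\big[@psadd k/ps0 k]_(i < size gens) psmul (r i) (nth (ps0 k) gens i)).
Proof.
have sum_gens (r : nat -> ps k) :
    \big[@psadd k/ps0 k]_(i < size gens) psmul (r i) (nth (ps0 k) gens i) =
    \big[@psadd k/ps0 k]_(i < size pf') psmul (r i) (X `|f - nth (0 : int) pf' i|%N).
  by rewrite size_map; apply: eq_bigr => i _; rewrite nth_gens.
split=> [[r [Rr ->]] | [y [r [Ry [Rr ->]]]]].
  exists (r f), (fun i => r (nth 0 pf' i)); do 2 split => //.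
  by rewrite big_pf_split subrr psmul1r (sum_gens (fun i => r (nth 0 pf' i))).
exists (fun c => if c == f then y else r (index c pf')); split=> [c|]; first by case: eqP.
rewrite big_pf_split eqxx subrr psmul1r sum_gens; congr psadd; apply: eq_bigr => i _.
have := mem_nth 0 (ltn_ord i); rewrite mem_filter => /andP [/negbTE -> _].
by rewrite index_uniq // filter_uniq.
Qed.

Lemma canonK_quot_indep : (forall L, ~ Rchain R K (ring_gen K) 3 L) ->
  forall r : nat -> ps k, (forall i, R (r i)) ->
  R (\big[@psadd k/ps0 k]_(i < size gens) psmul (r i) (nth (ps0 k) gens i)) ->
  forall i, (i < size gens)%N -> R (psmul (r i) (nth (ps0 k) gens i)).
Proof.
move=> no_chain r Rr R_sum i lt_i n t_i_neq0; apply: NNPP => n_gap.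
have mem_pf j : (j < size pf')%N -> nth 0 pf' j \in pf.
  by move=> /(mem_nth 0); rewrite mem_filter => /andP [].
have lt_i' := lt_i; rewrite size_map in lt_i'.
move: (t_i_neq0); rewrite nth_gens // => /coef_psmulX_neq0 [le_i /Rr H_i].
have rest_neq0 :
    \sum_(j < size gens | j != Ordinal lt_i) psmul (r j) (nth (ps0 k) gens j) n != 0.
  apply: contra_not_neq n_gap => rest0; apply: R_sum.
  by rewrite coef_pssum (bigD1 (Ordinal lt_i)) //= rest0 addr0.
have [j ne_ji] := sum_neq0_summand rest_neq0.
have lt_j : (j < size pf')%N by rewrite -(size_map (fun c => X `|f - c|%N)).
rewrite nth_gens // => /coef_psmulX_neq0 [le_j /Rr H_j].
have ne_c : nth 0 pf' i != nth 0 pf' j by rewrite nth_uniq ?filter_uniq // eq_sym.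
have [L /no_chain //] :=
  canonK_Rchain3 n_gap (mem_pf _ lt_i') (mem_pf _ lt_j) ne_c le_i H_i le_j H_j.
Qed.

End CanonicalModule.

Theorem proposition2p4 (k : fieldType) (a : seq nat) (f : int) (pf : seq int) :
  all (fun x => 0 < x)%N a ->
  (\big[gcdn/0]_(x <- a) x)%N = 1%N ->
  frobenius a f ->
  uniq pf -> (forall c : int, c \in pf <-> pseudo_frobenius a c) ->
  two_AGL (semigroup_ring k a) (canonK k a f pf) ->
  quot_direct_sum (semigroup_ring k a) (semigroup_ring k a) (canonK k a f pf)
    [seq @psX k `|f - c|%N | c <- pf & c != f].
Proof.
move=> a_gt0 _ f_frob pf_uniq pfP [_ AGL_len].
split=> [x|]; first exact: canonK_span.
by apply: canonK_quot_indep => // L /AGL_len.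
Qed.
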